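(* Let $(\mathcal A,r)$ be a potential population game with potential $\Phi$, $\mathcal G=(\mathcal H,\boldsymbol\eta,W)$ an undirected connected community network, and $\mathbf f$ an imitation mechanism satisfying Assumption 1. For $\mathbf x\in\mathcal X$ with $\mathbf y=\mathbf x\mathbf 1$, define $\dot y_i=\sum_{h\in\mathcal H}\dot x_{ih}$ using the right-hand side of the network imitation dynamics at $\mathbf x$, and $\dot\Phi(\mathbf y)=\sum_{i\in\mathcal A}\frac{\partial\Phi(\mathbf y)}{\partial y_i}\dot y_i$. Then $\dot\Phi(\mathbf y)\ge 0$ for every $\mathbf x\in\mathcal X$, with equality if and only if $\mathbf x\in\mathcal X^\bullet$.
   Context: Let $\mathcal A$ be a finite set of actions, $\mathcal Y=\{\mathbf y\in\mathbb R_+^{\mathcal A}:\mathbf 1^\top\mathbf y=1\}$, reward functions $r_i:\mathcal Y\to\mathbb R$. The game $(\mathcal A,r)$ is potential if there is a differentiable $\Phi:\mathcal Y\to\mathbb R$ (differentiable on a neighborhood of $\mathcal Y$) with $r_j(\mathbf y)-r_i(\mathbf y)=\frac{\partial\Phi}{\partial y_j}(\mathbf y)-\frac{\partial\Phi}{\partial y_i}(\mathbf y)$ for all $i,j\in\mathcal A$, $\mathbf y\in\mathcal Y$. Community network $\mathcal G=(\mathcal H,\boldsymbol\eta,W)$: finite $\mathcal H$, $\eta_h>0$ with $\sum_h\eta_h=1$, nonnegative $W$ with positive diagonal; connected = $W$ irreducible; undirected = $W=W^\top$. $\mathcal X=\{\mathbf x\in\mathbb R_+^{\mathcal A\times\mathcal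 H}:\mathbf 1^\top\mathbf x=\boldsymbol\eta^\top\}$. Imitation mechanism: Lipschitz $\mathbf f:\mathcal Y\to\mathbb R_+^{\mathcal A\times\mathcal A}$. Dynamics: $$\dot x_{ih}=\sum_{j\in\mathcal A}\sum_{k\in\mathcal H}\big(x_{jh}W_{hk}x_{ik}f_{ji}(\mathbf x\mathbf 1)-x_{ih}W_{hk}x_{jk}f_{ij}(\mathbf x\mathbf 1)\big).$$ Assumption 1: $\operatorname{sgn}(f_{ij}(\mathbf y)-f_{ji}(\mathbf y))=\operatorname{sgn}(r_j(\mathbf y)-r_i(\mathbf y))$ for all $i,j,\mathbf y$. $\mathcal Y^\bullet=\{\mathbf y\in\mathcal Y:y_i>0,y_j>0\Rightarrow r_i(\mathbf y)=r_j(\mathbf y)\}$, $\mathcal X^\bullet=\{\mathbf x\in\mathcal X:\mathbf x\mathbf 1\in\mathcal Y^\bullet\}$. *)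

(* Actions A = 'I_n, communities H = 'I_m (any finite set is in bijection
   with an ordinal). Population states y are row vectors 'rV[R]_n,
   network states x are matrices 'M[R]_(n, m) (rows = actions, columns =
   communities). *)
From HB Require Import structures.
From mathcomp Require Import all_boot all_order all_algebra.
From mathcomp Require Import all_classical all_reals all_analysis.
Set Implicit Arguments. Unset Strict Implicit. Unset Printing Implicit Defensive.
Import Order.TTheory GRing.Theory Num.Theory.
Import numFieldNormedType.Exports.
Local Open Scope classical_set_scope.
Local Open Scope ring_scope.

Section Defs.
Variables (R : realType) (n m : nat).

Definition simplex : set 'rV[R]_n :=
  [set y | (forall i, 0 <= y ord0 i) /\ \sum_i y ord0 i = 1].

Definition unitv (i : 'I_n) : 'rV[R]_n := delta_mx ord0 i.

Definition pderiv (Phi : 'rV[R]_n -> R) (i : 'I_n) (y : 'rV[R]_n) : R :=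
  'D_(unitv i) Phi y.

Definition diff_near_simplex (Phi : 'rV[R]_n -> R) : Prop :=
  exists U : set 'rV[R]_n, open U /\ simplex `<=` U /\
    forall y, U y -> differentiable Phi y.

Definition potential_game (r : 'I_n -> 'rV[R]_n -> R) (Phi : 'rV[R]_n -> R) :=
  diff_near_simplex Phi /\
  forall i j y, simplex y -> r j y - r i y = pderiv Phi j y - pderiv Phi i y.

Definition community_network (eta : 'I_m -> R) (W : 'M[R]_m) : Prop :=
  (forall h, 0 < eta h) /\ \sum_h eta h = 1 /\
  (forall h k, 0 <= W h k) /\ (forall h, 0 < W h h).

Definition irreducible (W : 'M[R]_m) : Prop :=
  forall h k, connect (fun a b => 0 < W a b) h k.

Definition undirected (W : 'M[R]_m) : Prop := W^T = W.

Definition netstates (eta : 'I_m -> R) : set 'M[R]_(n, m) :=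
  [set x | (forall i h, 0 <= x i h) /\ forall h, \sum_i x i h = eta h].

Definition aggr (x : 'M[R]_(n, m)) : 'rV[R]_n := \row_i \sum_h x i h.

Definition imitation_mechanism (f : 'rV[R]_n -> 'M[R]_n) : Prop :=
  (forall y, simplex y -> forall i j, 0 <= f y i j) /\
  exists L : R, forall y y', simplex y -> simplex y' ->
    `|f y - f y'| <= L * `|y - y'|.

Definition assumption1 (r : 'I_n -> 'rV[R]_n -> R) (f : 'rV[R]_n -> 'M[R]_n) :=
  forall i j y, simplex y ->
    Num.sg (f y i j - f y j i) = Num.sg (r j y - r i y).

Definition xdot (W : 'M[R]_m) (f : 'rV[R]_n -> 'M[R]_n)
  (x : 'M[R]_(n, m)) (i : 'I_n) (h : 'I_m) : R :=
  \sum_j \sum_k (x j h * W h k * x i k * f (aggr x) j i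
                 - x i h * W h k * x j k * f (aggr x) i j).

Definition ydot W f x (i : 'I_n) : R := \sum_h xdot W f x i h.

Definition Phidot (Phi : 'rV[R]_n -> R) W f x : R :=
  \sum_i pderiv Phi i (aggr x) * ydot W f x i.

Definition Ybullet (r : 'I_n -> 'rV[R]_n -> R) : set 'rV[R]_n :=
  [set y | simplex y /\
     forall i j, 0 < y ord0 i -> 0 < y ord0 j -> r i y = r j y].

Definition Xbullet r eta : set 'M[R]_(n, m) :=
  [set x | netstates eta x /\ Ybullet r (aggr x)].

End Defs.

From HB Require Import structures.
From mathcomp Require Import all_boot all_order all_algebra.
From mathcomp Require Import all_classical all_reals all_analysis.
From mathcomp Require Import ring.
Set Implicit Arguments. Unset Strict Implicit. Unset Printing Implicit Defensive.
Import Order.TTheory GRing.Theory Num.Theory.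
Local Open Scope classical_set_scope.
Local Open Scope ring_scope.

(* Write y = x 1 and let the contact mass between two actions be
     C i j = sum_h sum_k x_ih W_hk x_jk,
   symmetric when W is.  The aggregate dynamics becomes a sum of pairwise
   fluxes  ydot_i = sum_j C i j (f_ji - f_ij),  antisymmetric in (i, j).
   Symmetrising the potential derivative therefore gives
     2 Phidot = sum_i sum_j C i j (f_ji - f_ij) (dPhi_i - dPhi_j),
   and the potential property turns dPhi_i - dPhi_j into r_i - r_j.  By
   Assumption 1 each summand is a product of two numbers of equal sign, hence
   nonnegative: this gives Phidot >= 0, and Phidot = 0 iff every pair in
   contact earns equal rewards.  Finally, since W is irreducible and every
   community is populated, equal rewards propagate along contacts to every
   pair of used actions, which is exactly the condition x in X^bullet. *)

Lemma mul_samesg_ge0 (R : realDomainType) (a b : R) :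
  Num.sg a = Num.sg b -> 0 <= a * b.
Proof. by move=> sgab; rewrite -sgr_ge0 sgrM sgab -expr2 sqr_ge0. Qed.

Lemma mul_samesg_eq0 (R : realDomainType) (a b : R) :
  Num.sg a = Num.sg b -> a * b = 0 -> b = 0.
Proof.
move=> sgab /(congr1 Num.sg); rewrite sgrM sgab sgr0 -expr2.
by move/eqP; rewrite sqrf_eq0 sgr_eq0 => /eqP.
Qed.

Lemma psum2_eq0P (R : numDomainType) (I J : finType) (G : I -> J -> R) :
  (forall i j, 0 <= G i j) ->
  \sum_i \sum_j G i j = 0 <-> forall i j, G i j = 0.
Proof.
move=> G_ge0; split=> [sum0 i j|G0]; last first.
  by rewrite big1 // => i _; rewrite big1.
have row_ge0 a : true -> 0 <= \sum_j G a j by move=> _; exact: sumr_ge0.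
have row_i : \sum_j G i j = 0 by exact: psumr_eq0P row_ge0 sum0 i isT.
exact: psumr_eq0P (fun b _ => G_ge0 i b) row_i j isT.
Qed.

Lemma psum_gt0P {R : numDomainType} {I : finType} {F : I -> R} :
  (forall i, 0 <= F i) -> 0 < \sum_i F i <-> exists i, 0 < F i.
Proof.
move=> F_ge0; split=> [sum_gt0|[i Fi_gt0]].
  have [|i /andP[_ Fi_gt0]] := psumr_neq0P (P := xpredT) (fun i _ => F_ge0 i).
    by apply/eqP; rewrite lt0r_neq0.
  by exists i.
by rewrite (bigD1 i) //= ltr_wpDr // sumr_ge0.
Qed.

(* Symmetrisation: pairing an antisymmetric flux g with potentials D counts
   each pair twice, once with each orientation. *)
Lemma sum_antisym_flux (R : pzRingType) (I : finType) (D : I -> R)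
    (g : I -> I -> R) :
  (forall i j, g j i = - g i j) ->
  (\sum_i D i * \sum_j g i j) *+ 2 = \sum_i \sum_j (D i - D j) * g i j.
Proof.
move=> g_anti.
have swapped : \sum_i \sum_j D j * g i j = - \sum_i D i * \sum_j g i j.
  rewrite exchange_big -sumrN; apply: eq_bigr => j _.
  by rewrite big_distrr -sumrN; apply: eq_bigr => i _; rewrite g_anti mulrN.
under [RHS]eq_bigr do under eq_bigr do rewrite mulrBl.
under [RHS]eq_bigr do rewrite sumrB.
rewrite sumrB swapped opprK mulr2n; congr (_ + _).
by apply: eq_bigr => i _; rewrite big_distrr.
Qed.

Section Contact.
Variables (R : realType) (n m : nat) (W : 'M[R]_m) (x : 'M[R]_(n, m)).

Definition contact (i j : 'I_n) : R := \sum_h \sum_k x i h * W h k * x j k.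

Lemma contact_sym i j : undirected W -> contact i j = contact j i.
Proof.
move=> W_sym; rewrite /contact exchange_big; apply: eq_bigr => h _.
apply: eq_bigr => k _; rewrite -[in W k h]W_sym mxE; ring.
Qed.

Lemma ydot_contact (f : 'rV[R]_n -> 'M[R]_n) i :
  ydot W f x i =
  \sum_j (contact j i * f (aggr x) j i - contact i j * f (aggr x) i j).
Proof.
rewrite /ydot /xdot exchange_big; apply: eq_bigr => j _.
under eq_bigr do rewrite sumrB.
rewrite sumrB /contact !big_distrl; congr (_ - _); apply: eq_bigr => h _.
  by rewrite big_distrl.
by rewrite big_distrl.
Qed.

Hypotheses (x_ge0 : forall i h, 0 <= x i h) (W_ge0 : forall h k, 0 <= W h k).

Lemma contact_ge0 i j : 0 <= contact i j.
Proof. by apply: sumr_ge0 => h _; apply: sumr_ge0 => k _; rewrite !mulr_ge0. Qed.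

Lemma contact_gt0P i j :
  0 < contact i j <-> exists h k, [/\ 0 < x i h, 0 < W h k & 0 < x j k].
Proof.
have term_ge0 h k : 0 <= x i h * W h k * x j k by rewrite !mulr_ge0.
have row_ge0 h : 0 <= \sum_k x i h * W h k * x j k by apply: sumr_ge0.
split=> [|[h [k [xih Whk xjk]]]].
  case/(psum_gt0P row_ge0)=> h /(psum_gt0P (term_ge0 h))[k pos].
  move: (lt0r_neq0 pos); rewrite !mulf_eq0 !negb_or => /andP[/andP[xih Whk] xjk].
  by exists h, k; rewrite !lt0r xih Whk xjk !x_ge0 W_ge0.
apply/(psum_gt0P row_ge0); exists h.
by apply/(psum_gt0P (term_ge0 h)); exists k; rewrite !mulr_gt0.
Qed.

Lemma contact_consensus (T : Type) (c : 'I_n -> T) :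
  irreducible W -> (forall h, 0 < W h h) -> (forall h, exists a, 0 < x a h) ->
  (forall i j, 0 < contact i j -> c i = c j) <->
  (forall i j, 0 < aggr x ord0 i -> 0 < aggr x ord0 j -> c i = c j).
Proof.
move=> W_irr W_diag populated.
have aggr_gt0P i : 0 < aggr x ord0 i <-> exists h, 0 < x i h.
  by rewrite mxE; apply: psum_gt0P.
split=> [agree i j /aggr_gt0P[h0 xih0] /aggr_gt0P[k0 xjk0] | agree i j].
  pose agrees_with_i h := forall a, 0 < x a h -> c a = c i.
  have start : agrees_with_i h0.
    by move=> a xah0; apply: agree; apply/contact_gt0P; exists h0, h0.
  have step h k : 0 < W h k -> agrees_with_i h -> agrees_with_i k.
    move=> Whk agree_h b xbk; have [a xah] := populated h.
    by rewrite -(agree_h a xah); symmetry; apply: agree; apply/contact_gt0P; exists h, k.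
  have along p h : path (fun a b => 0 < W a b) h p ->
      agrees_with_i h -> agrees_with_i (last h p).
    elim: p h => [//|k p IHp] h /= /andP[Whk Hp] agree_h.
    exact: IHp Hp (step h k Whk agree_h).
  have /connectP[p Hp k0_last] := W_irr h0 k0.
  by rewrite k0_last in xjk0; symmetry; exact: along Hp start j xjk0.
case/contact_gt0P=> h [k [xih _ xjk]].
by apply: agree; apply/aggr_gt0P; [exists h | exists k].
Qed.

End Contact.

Lemma aggr_simplex (R : realType) (n m : nat) (eta : 'I_m -> R)
    (x : 'M[R]_(n, m)) :
  \sum_h eta h = 1 -> netstates eta x -> simplex (aggr x).
Proof.
move=> eta_sum [x_ge0 x_col]; split=> [i|]; first by rewrite mxE sumr_ge0.
under eq_bigr do rewrite mxE.
by rewrite exchange_big /=; under eq_bigr do rewrite x_col.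
Qed.

Section PotentialGain.
Variables (R : realType) (n m : nat) (r : 'I_n -> 'rV[R]_n -> R)
  (Phi : 'rV[R]_n -> R) (W : 'M[R]_m) (f : 'rV[R]_n -> 'M[R]_n)
  (x : 'M[R]_(n, m)).

Definition pair_gain (i j : 'I_n) : R :=
  contact W x i j * ((f (aggr x) j i - f (aggr x) i j) *
                     (r i (aggr x) - r j (aggr x))).

(* Symmetrising the exchange form of ydot: twice Phidot is the total gain. *)
Lemma Phidot_twice :
  undirected W ->
  (forall i j, r j (aggr x) - r i (aggr x) =
               pderiv Phi j (aggr x) - pderiv Phi i (aggr x)) ->
  Phidot Phi W f x *+ 2 = \sum_i \sum_j pair_gain i j.
Proof.
move=> W_sym pot.
pose flux i j := contact W x i j * (f (aggr x) j i - f (aggr x) i j).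
have ydotE i : ydot W f x i = \sum_j flux i j.
  by rewrite ydot_contact; apply: eq_bigr => j _; rewrite (contact_sym _ j) // /flux mulrBr.
have flux_anti i j : flux j i = - flux i j.
  by rewrite /flux contact_sym // -mulrN opprB.
rewrite /Phidot; under eq_bigr do rewrite ydotE.
rewrite sum_antisym_flux //; apply: eq_bigr => i _; apply: eq_bigr => j _.
by rewrite -pot /pair_gain /flux; ring.
Qed.

Hypotheses (x_ge0 : forall i h, 0 <= x i h) (W_ge0 : forall h k, 0 <= W h k).
Hypothesis f_sg : forall i j, Num.sg (f (aggr x) i j - f (aggr x) j i) =
                              Num.sg (r j (aggr x) - r i (aggr x)).

(* Imitation flows towards the better action, so no exchange loses. *)
Lemma pair_gain_ge0 i j : 0 <= pair_gain i j.
Proof. by rewrite mulr_ge0 ?contact_ge0 // mul_samesg_ge0. Qed.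

Lemma pair_gain_eq0P :
  (forall i j, pair_gain i j = 0) <->
  (forall i j, 0 < contact W x i j -> r i (aggr x) = r j (aggr x)).
Proof.
split=> [gain0 i j contact_gt0 | equal i j].
  have /eqP := gain0 i j; rewrite mulf_eq0 gt_eqF //= => /eqP gain.
  by apply/eqP; rewrite -subr_eq0; apply/eqP; exact: mul_samesg_eq0 gain.
have := contact_ge0 x_ge0 W_ge0 i j; rewrite le0r => /orP[/eqP c0|c_gt0].
  by rewrite /pair_gain c0 mul0r.
by rewrite /pair_gain (equal i j c_gt0) subrr !mulr0.
Qed.

End PotentialGain.

Theorem lemma2 (R : realType) (n m : nat)
  (r : 'I_n -> 'rV[R]_n -> R) (Phi : 'rV[R]_n -> R)
  (eta : 'I_m -> R) (W : 'M[R]_m) (f : 'rV[R]_n -> 'M[R]_n) :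
  potential_game r Phi ->
  community_network eta W -> undirected W -> irreducible W ->
  imitation_mechanism f -> assumption1 r f ->
  forall x : 'M[R]_(n, m), netstates eta x ->
    0 <= Phidot Phi W f x /\
    (Phidot Phi W f x = 0 <-> Xbullet r eta x).
Proof.
move=> [_ pot] [eta_gt0 [eta_sum [W_ge0 W_diag]]] W_sym W_irr _ f_sg x x_state.
have [x_ge0 x_col] := x_state.
have y_simplex := aggr_simplex eta_sum x_state.
have twice := Phidot_twice f W_sym (fun i j => pot i j _ y_simplex).
have gain_ge0 := pair_gain_ge0 x_ge0 W_ge0 (fun i j => f_sg i j _ y_simplex).
have gain_eq0P := pair_gain_eq0P x_ge0 W_ge0 (fun i j => f_sg i j _ y_simplex).
have populated h : exists a, 0 < x a h.
  by apply/(psum_gt0P (x_ge0^~ h)); rewrite x_col.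
split.
  by rewrite -(pmulrn_lge0 _ (ltn0Sn 1)) twice sumr_ge0 // => i _; rewrite sumr_ge0.
have Phidot_eq0 : Phidot Phi W f x = 0 <-> \sum_i \sum_j pair_gain r W f x i j = 0.
  by rewrite -twice; split=> [->|/eqP]; rewrite ?mul0rn // mulrn_eq0 => /eqP.
apply: iff_trans Phidot_eq0 _; apply: iff_trans (psum2_eq0P gain_ge0) _.
apply: iff_trans gain_eq0P _.
apply: iff_trans (contact_consensus x_ge0 W_ge0 _ W_irr W_diag populated) _.
by split=> [agree|[_ [_ agree]]].
Qed.
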